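(* For a unital algebra $A$ over a field $k$, there is a bijective correspondence between weak bialgebra structures on $A$ and weak multiplier bialgebra structures on $A$.
   Context: For a unital algebra $A$ one has $\mathbb M(A)=A$ and $\mathbb M(A\otimes A)=A\otimes A$. A weak bialgebra structure on a unital $k$-algebra $A$ is a coassociative, counital coalgebra structure $(\Delta,\epsilon)$ with multiplicative $\Delta:A\to A\otimes A$, such that $(\Delta\otimes\mathrm{id})\Delta(1)=(\Delta(1)\otimes1)(1\otimes\Delta(1))=(1\otimes\Delta(1))(\Delta(1)\otimes1)$ and $\epsilon(abc)=(\epsilon\otimes\epsilon)((a\otimes1)\Delta(b)(1\otimes c))=(\epsilon\otimes\epsilon)((a\otimes1)\Delta^{\mathrm{op}}(b)(1\otimes c))$ for all $a,b,c$, where $\Delta^{\mathrm{op}}=\mathsf{tw}\circ\Delta$ and $\mathsf{tw}(a\otimes b)=b\otimes a$. A weak multiplier bialgebra over $k$ is an idempotent algebra $A$ (i.e. $\mu:A\otimes A\to A$ surjective) with non-degenerate multiplication (($ab=0\ \forall a$)$\Rightarrow b=0$ and ($ba=0\ \forall a$)$\Rightarrow b=0$), with multiplier algebra $\mathbb M(A)$ (pairs $(\lambda,\rho)$ of linear maps $A\to A$ with $a\lambda(b)=\rho(a)b$, containing $A$ as a dense ideal; $A\otimes A\subseteq\mathbb M(A\otimes A)$), together with an idempotent $E\in\mathbb M(A\otimes A)$, a multiplicative linear $\Delta:A\to\mathbb M(A\otimes A)$ and a linear $\epsilon:A\to k$ such that: (i) $T_1(a\otimes b):=\Delta(a)(1\otimes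 b)$ and $T_2(a\otimes b):=(a\otimes1)\Delta(b)$ lie in $A\otimes A$; (ii) $(T_2\otimes\mathrm{id})(\mathrm{id}\otimes T_1)=(\mathrm{id}\otimes T_1)(T_2\otimes\mathrm{id})$; (iii) $(\epsilon\otimes\mathrm{id})T_1=\mu=(\mathrm{id}\otimes\epsilon)T_2$; (iv) $\langle\Delta(a)(b\otimes b')\rangle=\langle E(b\otimes b')\rangle$ and $\langle(b\otimes b')\Delta(a)\rangle=\langle(b\otimes b')E\rangle$ (linear spans over $a,b,b'\in A$); (v) $(E\otimes1)(1\otimes E)=E^{(3)}=(1\otimes E)(E\otimes1)$ where $E^{(3)}:=(\overline{\mathrm{id}\otimes\Delta})(E)=(\overline{\Delta\otimes\mathrm{id}})(E)$, with $\overline{\ \cdot\ }$ denoting the unique multiplicative extensions to multiplier algebras sending $1$ to the idempotent $E$ (resp. its appropriate leg), which exist by (iv); (vi) $(\epsilon\otimes\mathrm{id})((1\otimes a)E(b\otimes c))=(\epsilon\otimes\mathrm{id})(\Delta(a)(b\otimes c))$ and $(\epsilon\otimes\mathrm{id})((a\otimes b)E(1\otimes c))=(\epsilon\otimes\mathrm{id})((a\otimes b)\Delta(c))$ for all $a,b,c\in A$. *)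

(* Tensor products A (x) A and A (x) A (x) A over the field k
   are represented by formal sums (finite lists of pure tensors) together with
   the equality of the tensor product, characterised by its universal property:
   two formal sums are equal in A (x) A iff every k-bilinear map (into any
   k-vector space) takes the same value on them (similarly for trilinear maps
   and A (x) A (x) A).  Scalars are absorbed into the first tensor factor. *)
From HB Require Import structures.
From mathcomp Require Import all_boot all_order all_algebra.
Set Implicit Arguments. Unset Strict Implicit. Unset Printing Implicit Defensive.
Import GRing.Theory.
Local Open Scope ring_scope.

Section Tensors.
Variables (k : fieldType) (A : algType k).

Definition tens2 := seq (A * A).
Definition tens3 := seq (A * A * A).

Definition bilinear2 (U : lmodType k) (b : A -> A -> U) : Prop :=
  (forall a (c : k) x y, b a (c *: x + y) = c *: b a x + b a y) /\
  (forall a (c : k) x y, b (c *: x + y) a = c *: b x a + b y a).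

Definition trilinear3 (U : lmodType k) (b : A -> A -> A -> U) : Prop :=
  (forall a1 a2 (c : k) x y, b a1 a2 (c *: x + y) = c *: b a1 a2 x + b a1 a2 y) /\
  (forall a1 a3 (c : k) x y, b a1 (c *: x + y) a3 = c *: b a1 x a3 + b a1 y a3) /\
  (forall a2 a3 (c : k) x y, b (c *: x + y) a2 a3 = c *: b x a2 a3 + b y a2 a3).

Definition teq2 (s t : tens2) : Prop :=
  forall (U : lmodType k) (b : A -> A -> U), bilinear2 b ->
    \sum_(p <- s) b p.1 p.2 = \sum_(p <- t) b p.1 p.2.

Definition teq3 (s t : tens3) : Prop :=
  forall (U : lmodType k) (b : A -> A -> A -> U), trilinear3 b ->
    \sum_(p <- s) b p.1.1 p.1.2 p.2 = \sum_(p <- t) b p.1.1 p.1.2 p.2.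

Definition tpure2 (a b : A) : tens2 := [:: (a, b)].
Definition tscale2 (c : k) (s : tens2) : tens2 := [seq (c *: p.1, p.2) | p <- s].
Definition tmul2 (s t : tens2) : tens2 :=
  [seq (x.1 * y.1, x.2 * y.2) | x <- s, y <- t].
Definition tmul3 (s t : tens3) : tens3 :=
  [seq (x.1.1 * y.1.1, x.1.2 * y.1.2, x.2 * y.2) | x <- s, y <- t].
Definition ttw (s : tens2) : tens2 := [seq (p.2, p.1) | p <- s].
Definition tleft1 (s : tens2) : tens3 := [seq (p.1, p.2, 1) | p <- s].
Definition tright1 (s : tens2) : tens3 := [seq (1, p.1, p.2) | p <- s].

Definition tmu (s : tens2) : A := \sum_(p <- s) p.1 * p.2.

Definition DeltaId (D : A -> tens2) (s : tens2) : tens3 :=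
  flatten [seq [seq (x.1, x.2, p.2) | x <- D p.1] | p <- s].
Definition IdDelta (D : A -> tens2) (s : tens2) : tens3 :=
  flatten [seq [seq (p.1, x.1, x.2) | x <- D p.2] | p <- s].
Definition epsId (e : A -> k) (s : tens2) : A := \sum_(p <- s) e p.1 *: p.2.
Definition idEps (e : A -> k) (s : tens2) : A := \sum_(p <- s) e p.2 *: p.1.
Definition epsEps (e : A -> k) (s : tens2) : k := \sum_(p <- s) e p.1 * e p.2.

Definition T1 (D : A -> tens2) (s : tens2) : tens2 :=
  flatten [seq tmul2 (D p.1) (tpure2 1 p.2) | p <- s].
Definition T2 (D : A -> tens2) (s : tens2) : tens2 :=
  flatten [seq tmul2 (tpure2 p.1 1) (D p.2) | p <- s].
Definition idT1 (D : A -> tens2) (t : tens3) : tens3 :=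
  flatten [seq [seq (p.1.1, x.1, x.2) | x <- T1 D (tpure2 p.1.2 p.2)] | p <- t].
Definition T2id (D : A -> tens2) (t : tens3) : tens3 :=
  flatten [seq [seq (x.1, x.2, p.2) | x <- T2 D (tpure2 p.1.1 p.1.2)] | p <- t].

Definition inspan2 (X : Type) (g : X -> tens2) (t : tens2) : Prop :=
  exists l : seq (k * X), teq2 t (flatten [seq tscale2 q.1 (g q.2) | q <- l]).

Definition linear_tens (D : A -> tens2) : Prop :=
  forall (c : k) a b, teq2 (D (c *: a + b)) (tscale2 c (D a) ++ D b).
Definition linear_scal (e : A -> k) : Prop :=
  forall (c : k) a b, e (c *: a + b) = c * e a + e b.
Definition multiplicative_tens (D : A -> tens2) : Prop :=
  forall a b, teq2 (D (a * b)) (tmul2 (D a) (D b)).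

Record is_weak_bialgebra (D : A -> tens2) (e : A -> k) : Prop := {
  wb_Dlin : linear_tens D;
  wb_elin : linear_scal e;
  wb_coassoc : forall a, teq3 (DeltaId D (D a)) (IdDelta D (D a));
  wb_counitl : forall a, epsId e (D a) = a;
  wb_counitr : forall a, idEps e (D a) = a;
  wb_mult : multiplicative_tens D;
  wb_unit1 : teq3 (DeltaId D (D 1)) (tmul3 (tleft1 (D 1)) (tright1 (D 1)));
  wb_unit2 : teq3 (DeltaId D (D 1)) (tmul3 (tright1 (D 1)) (tleft1 (D 1)));
  wb_counit1 : forall a b c, e (a * b * c) =
     epsEps e (tmul2 (tmul2 (tpure2 a 1) (D b)) (tpure2 1 c));
  wb_counit2 : forall a b c, e (a * b * c) =
     epsEps e (tmul2 (tmul2 (tpure2 a 1) (ttw (D b))) (tpure2 1 c))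
}.

(* weak multiplier bialgebra structure (E, D, e) on A; since A is unital,
   M(A) = A and M(A (x) A) = A (x) A, so E is an element of A (x) A and D maps
   A to A (x) A; the multiplicative extensions of id (x) D and D (x) id to
   M(A (x) A) = A (x) A are id (x) D and D (x) id themselves. *)
Record is_weak_multiplier_bialgebra (E : tens2) (D : A -> tens2) (e : A -> k)
  : Prop := {
  wm_idempotent : forall a : A, exists s : tens2, a = tmu s;
  wm_nondeg_l : forall b : A, (forall a, a * b = 0) -> b = 0;
  wm_nondeg_r : forall b : A, (forall a, b * a = 0) -> b = 0;
  wm_Eidem : teq2 (tmul2 E E) E;
  wm_Dlin : linear_tens D;
  wm_Dmult : multiplicative_tens D;
  wm_elin : linear_scal e;
  (* (i) holds automatically: T1, T2 map A (x) A to A (x) A by construction *)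
  wm_T : forall t : tens3, teq3 (T2id D (idT1 D t)) (idT1 D (T2id D t));
  wm_counitl : forall s : tens2, epsId e (T1 D s) = tmu s;
  wm_counitr : forall s : tens2, idEps e (T2 D s) = tmu s;
  wm_span_l : forall t : tens2,
    inspan2 (fun x : A * A * A => tmul2 (D x.1.1) (tpure2 x.1.2 x.2)) t <->
    inspan2 (fun x : A * A => tmul2 E (tpure2 x.1 x.2)) t;
  wm_span_r : forall t : tens2,
    inspan2 (fun x : A * A * A => tmul2 (tpure2 x.1.2 x.2) (D x.1.1)) t <->
    inspan2 (fun x : A * A => tmul2 (tpure2 x.1 x.2) E) t;
  (* (v), with E^(3) = (id (x) D)(E) = (D (x) id)(E) *)
  wm_E3 : teq3 (IdDelta D E) (DeltaId D E);
  wm_E3l : teq3 (tmul3 (tleft1 E) (tright1 E)) (IdDelta D E);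
  wm_E3r : teq3 (tmul3 (tright1 E) (tleft1 E)) (IdDelta D E);
  wm_eps1 : forall a b c,
    epsId e (tmul2 (tmul2 (tpure2 1 a) E) (tpure2 b c)) =
    epsId e (tmul2 (D a) (tpure2 b c));
  wm_eps2 : forall a b c,
    epsId e (tmul2 (tmul2 (tpure2 a b) E) (tpure2 1 c)) =
    epsId e (tmul2 (tpure2 a b) (D c))
}.

End Tensors.

(* Since A is unital, every multiplier condition can be tested on pure tensors
   containing 1.  Condition (iv) with b = b' = 1, together with E^2 = E, forces
   E = Delta(1); condition (ii) at 1 (x) a (x) 1 is coassociativity, (iii) at
   a (x) 1 and 1 (x) a is counitality, and (v) becomes the weak unit axiom.  The
   two weak counit axioms are equivalent to (vi) through the identity
   eps(a 1_(1)) 1_(2) c = eps(a c_(1)) c_(2) and the contraction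
   eps(a 1_(1)) eps(1_(2) c) = eps(a c); in a weak bialgebra the former follows
   by evaluating a suitable trilinear map on Delta^(3)(1) in two ways. *)

From HB Require Import structures.
From mathcomp Require Import all_boot all_order all_algebra.
Set Implicit Arguments. Unset Strict Implicit. Unset Printing Implicit Defensive.
Import GRing.Theory.
Local Open Scope ring_scope.

Section TensorCalculus.
Variables (k : fieldType) (A : algType k).
Implicit Types (s t : tens2 A) (a b c : A).

Definition eval2 (U : lmodType k) (B : A -> A -> U) s := \sum_(p <- s) B p.1 p.2.
Definition eval3 (U : lmodType k) (B : A -> A -> A -> U) (t : tens3 A) :=
  \sum_(p <- t) B p.1.1 p.1.2 p.2.
Definition linear_fun (V : lmodType k) (f : A -> V) :=
  forall (c : k) x y, f (c *: x + y) = c *: f x + f y.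

Lemma teq2E s t : teq2 s t ->
  forall (U : lmodType k) (B : A -> A -> U), bilinear2 B -> eval2 B s = eval2 B t.
Proof. exact. Qed.
Lemma teq2I s t :
  (forall (U : lmodType k) (B : A -> A -> U), bilinear2 B -> eval2 B s = eval2 B t) ->
  teq2 s t.
Proof. exact. Qed.
Lemma teq3E (s t : tens3 A) : teq3 s t ->
  forall (U : lmodType k) (B : A -> A -> A -> U), trilinear3 B -> eval3 B s = eval3 B t.
Proof. exact. Qed.
Lemma teq3I (s t : tens3 A) :
  (forall (U : lmodType k) (B : A -> A -> A -> U), trilinear3 B -> eval3 B s = eval3 B t) ->
  teq3 s t.
Proof. exact. Qed.

Lemma teq2_sym s t : teq2 s t -> teq2 t s.
Proof. by move=> st U B HB; rewrite st. Qed.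
Lemma teq2_trans s t r : teq2 s t -> teq2 t r -> teq2 s r.
Proof. by move=> st tr U B HB; rewrite st ?tr. Qed.
Lemma teq3_sym (s t : tens3 A) : teq3 s t -> teq3 t s.
Proof. by move=> st U B HB; rewrite st. Qed.
Lemma teq3_trans (s t r : tens3 A) : teq3 s t -> teq3 t r -> teq3 s r.
Proof. by move=> st tr U B HB; rewrite st ?tr. Qed.

Section Linearity.
Variable U : lmodType k.

Lemma linear_fun0 (f : A -> U) : linear_fun f -> f 0 = 0.
Proof.
move=> lf; have := lf 1 0 0; rewrite scaler0 addr0 scale1r => f00.
by apply: (addrI (f 0)); rewrite addr0 -f00.
Qed.

Lemma linear_fun_mull a : linear_fun (fun x : A => a * x).
Proof. by move=> c x y; rewrite mulrDr scalerAr. Qed.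
Lemma linear_fun_mulr a : linear_fun (fun x : A => x * a).
Proof. by move=> c x y; rewrite mulrDl scalerAl. Qed.

Lemma linear_fun_id : linear_fun (fun x : A => x).
Proof. by []. Qed.

Lemma linear_funZ (f : A -> U) (c0 : k) :
  linear_fun f -> linear_fun (fun x => c0 *: f x).
Proof. by move=> lf c x y; rewrite lf scalerDr !scalerA mulrC. Qed.

Lemma linear_fun_sum X (r : seq X) (F : X -> A -> U) :
  (forall i, linear_fun (F i)) -> linear_fun (fun y => \sum_(i <- r) F i y).
Proof.
by move=> lF c x y; rewrite scaler_sumr -big_split; apply: eq_bigr => i _; apply: lF.
Qed.

Lemma linear_fun_scal (e : A -> k) (v : U) :
  linear_scal e -> linear_fun (fun x => e x *: v).
Proof. by move=> le c x y; rewrite le scalerDl scalerA. Qed.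

Lemma bilinear2_of_linear (B : A -> A -> U) :
  (forall x, linear_fun (B x)) -> (forall y, linear_fun (B^~ y)) -> bilinear2 B.
Proof. by move=> l2 l1; split=> *; [apply: l2 | apply: (l1 _)]. Qed.

Lemma bilinear2_comp (B : A -> A -> U) (f g : A -> A) :
  bilinear2 B -> linear_fun f -> linear_fun g ->
  bilinear2 (fun x y => B (f x) (g y)).
Proof. by move=> [B2 B1] lf lg; split=> a0 c x y /=; rewrite ?lg ?B2 ?lf ?B1. Qed.

Lemma bilinear2_linr (B : A -> A -> U) x : bilinear2 B -> linear_fun (B x).
Proof. by case=> B2 _ c u v; apply: B2. Qed.
Lemma bilinear2_linl (B : A -> A -> U) y : bilinear2 B -> linear_fun (B^~ y).
Proof. by case=> _ B1 c u v; apply: B1. Qed.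

Lemma bilinear2_sum X (r : seq X) (F : X -> A -> A -> U) :
  (forall i, bilinear2 (F i)) -> bilinear2 (fun y z => \sum_(i <- r) F i y z).
Proof.
move=> bF; apply: bilinear2_of_linear => [y|z]; apply: linear_fun_sum => i.
  exact: bilinear2_linr.
exact: bilinear2_linl.
Qed.

Lemma trilinear3_of_linear (B : A -> A -> A -> U) :
  (forall x y, linear_fun (B x y)) -> (forall x z, linear_fun (B x ^~ z)) ->
  (forall y z, linear_fun (fun x => B x y z)) -> trilinear3 B.
Proof.
by move=> l3 l2 l1; split; [|split] => *; [apply: l3|apply: (l2 _ _)|apply: (l1 _ _)].
Qed.

Lemma trilinear3_comp (B : A -> A -> A -> U) (f g h : A -> A) :
  trilinear3 B -> linear_fun f -> linear_fun g -> linear_fun h ->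
  trilinear3 (fun x y z => B (f x) (g y) (h z)).
Proof.
move=> [B3 [B2 B1]] lf lg lh.
by split; [|split] => a0 a1 c x y /=; rewrite ?lh ?B3 ?lg ?B2 ?lf ?B1.
Qed.

Lemma trilinear3_lin3 (B : A -> A -> A -> U) x y :
  trilinear3 B -> linear_fun (B x y).
Proof. by case=> B3 _ ? ? ?; rewrite B3. Qed.
Lemma trilinear3_bil12 (B : A -> A -> A -> U) z :
  trilinear3 B -> bilinear2 (fun x y => B x y z).
Proof. by move=> [_ [B2 B1]]; split=> *; rewrite ?B2 ?B1. Qed.
Lemma trilinear3_bil23 (B : A -> A -> A -> U) x :
  trilinear3 B -> bilinear2 (fun y z => B x y z).
Proof. by move=> [B3 [B2 _]]; split=> *; rewrite ?B3 ?B2. Qed.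

End Linearity.

Lemma bilinear2_scal (e : A -> k) :
  linear_scal e -> bilinear2 (fun x y : A => e x *: y).
Proof.
move=> le; apply: bilinear2_of_linear => [x|y]; last exact: linear_fun_scal.
by move=> c u v; rewrite scalerDr !scalerA mulrC.
Qed.

Section Evaluation.
Variable U : lmodType k.
Implicit Types (B : A -> A -> U) (C : A -> A -> A -> U).

Lemma eval2_pure B a b : eval2 B (tpure2 a b) = B a b.
Proof. exact: big_seq1. Qed.

Lemma eval2_cat B s t : eval2 B (s ++ t) = eval2 B s + eval2 B t.
Proof. exact: big_cat. Qed.

Lemma eval2_tscale B (c : k) s : bilinear2 B -> eval2 B (tscale2 c s) = c *: eval2 B s.
Proof.
move=> [_ B1]; rewrite /eval2 big_map scaler_sumr; apply: eq_bigr => p _.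
have B0 : B 0 p.2 = 0 by apply: (linear_fun0 (f := B^~ p.2)) => ? ? ?; apply: B1.
by rewrite /= -[c *: p.1]addr0 B1 B0 addr0.
Qed.

Lemma eval2_tmul2 B s t :
  eval2 B (tmul2 s t) = \sum_(x <- s) \sum_(y <- t) B (x.1 * y.1) (x.2 * y.2).
Proof. exact: big_allpairs_dep. Qed.

Lemma eval2_tmul2_l B s t :
  eval2 B (tmul2 s t) = eval2 (fun u v => eval2 (fun x y => B (x * u) (y * v)) s) t.
Proof. by rewrite eval2_tmul2 /eval2 exchange_big. Qed.

Lemma eval2_tmul2_r B s t :
  eval2 B (tmul2 s t) = eval2 (fun u v => eval2 (fun x y => B (u * x) (v * y)) t) s.
Proof. exact: eval2_tmul2. Qed.

Lemma eval2_puremul B a b s :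
  eval2 B (tmul2 (tpure2 a b) s) = eval2 (fun x y => B (a * x) (b * y)) s.
Proof. by rewrite eval2_tmul2 big_seq1. Qed.

Lemma eval2_mulpure B a b s :
  eval2 B (tmul2 s (tpure2 a b)) = eval2 (fun x y => B (x * a) (y * b)) s.
Proof. by rewrite eval2_tmul2; apply: eq_bigr => x _; rewrite big_seq1. Qed.

Lemma eval2_span B X (g : X -> tens2 A) (l : seq (k * X)) : bilinear2 B ->
  eval2 B (flatten [seq tscale2 q.1 (g q.2) | q <- l]) =
  \sum_(q <- l) q.1 *: eval2 B (g q.2).
Proof.
move=> bB; rewrite /eval2 big_flatten big_map; apply: eq_bigr => q _.
exact: eval2_tscale.
Qed.

Lemma eq_eval2 (F G : A -> A -> U) s :
  (forall x y, F x y = G x y) -> eval2 F s = eval2 G s.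
Proof. by move=> FG; apply: eq_bigr => p _; rewrite FG. Qed.

Lemma eq_eval3 (F G : A -> A -> A -> U) (t : tens3 A) :
  (forall x y z, F x y z = G x y z) -> eval3 F t = eval3 G t.
Proof. by move=> FG; apply: eq_bigr => p _; rewrite FG. Qed.

Lemma eval2_exchange (F : A -> A -> A -> A -> U) s t :
  eval2 (fun u v => eval2 (F u v) t) s = eval2 (fun p q => eval2 (fun u v => F u v p q) s) t.
Proof. by rewrite /eval2 exchange_big. Qed.

Lemma eval3_seq1 C (p : A * A * A) : eval3 C [:: p] = C p.1.1 p.1.2 p.2.
Proof. exact: big_seq1. Qed.

Lemma eval3_tleft_tright C s t :
  eval3 C (tmul3 (tleft1 s) (tright1 t)) =
  eval2 (fun u v => eval2 (fun p q => C u (v * p) q) t) s.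
Proof.
rewrite /eval3 /tmul3 big_allpairs_dep /tleft1 big_map; apply: eq_bigr => x _.
by rewrite /tright1 big_map; apply: eq_bigr => y _; rewrite mulr1 mul1r.
Qed.

Lemma eval3_tright_tleft C s t :
  eval3 C (tmul3 (tright1 s) (tleft1 t)) =
  eval2 (fun u v => eval2 (fun p q => C p (u * q) v) t) s.
Proof.
rewrite /eval3 /tmul3 big_allpairs_dep /tright1 big_map; apply: eq_bigr => x _.
by rewrite /tleft1 big_map; apply: eq_bigr => y _; rewrite mulr1 mul1r.
Qed.

Lemma bilinear2_eval_mulr B s : bilinear2 B ->
  bilinear2 (fun u v => eval2 (fun x y => B (x * u) (y * v)) s).
Proof.
by move=> bB; apply: bilinear2_sum => p; apply: bilinear2_comp => //; apply: linear_fun_mull.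
Qed.

Lemma bilinear2_eval_mull B s : bilinear2 B ->
  bilinear2 (fun u v => eval2 (fun x y => B (u * x) (v * y)) s).
Proof.
by move=> bB; apply: bilinear2_sum => p; apply: bilinear2_comp => //; apply: linear_fun_mulr.
Qed.

End Evaluation.

Lemma tmul2_congr s s' t t' : teq2 s s' -> teq2 t t' -> teq2 (tmul2 s t) (tmul2 s' t').
Proof.
move=> ss' tt'; apply: teq2I => U B bB.
rewrite eval2_tmul2_r (teq2E ss'); last exact: bilinear2_eval_mull.
rewrite -eval2_tmul2_r !eval2_tmul2_l (teq2E tt') //; exact: bilinear2_eval_mulr.
Qed.

Lemma tmul2_congrl t s s' : teq2 s s' -> teq2 (tmul2 s t) (tmul2 s' t).
Proof. by move/tmul2_congr; apply. Qed.

Lemma tmul2_congrr s t t' : teq2 t t' -> teq2 (tmul2 s t) (tmul2 s t').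
Proof. exact: tmul2_congr. Qed.

Lemma tmul2A s t r : teq2 (tmul2 (tmul2 s t) r) (tmul2 s (tmul2 t r)).
Proof.
apply: teq2I => U B bB; rewrite !eval2_tmul2 /tmul2 big_allpairs_dep.
apply: eq_bigr => x _; rewrite big_allpairs_dep; apply: eq_bigr => y _.
by apply: eq_bigr => z _; rewrite !mulrA.
Qed.

Lemma tmul2_11r s : teq2 (tmul2 s (tpure2 1 1)) s.
Proof. by apply: teq2I => U B bB; rewrite eval2_mulpure; apply: eq_eval2 => x y; rewrite !mulr1. Qed.

Lemma tmul2_11l s : teq2 (tmul2 (tpure2 1 1) s) s.
Proof. by apply: teq2I => U B bB; rewrite eval2_puremul; apply: eq_eval2 => x y; rewrite !mul1r. Qed.

Lemma tleft_tright_congr s s' t t' : teq2 s s' -> teq2 t t' ->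
  teq3 (tmul3 (tleft1 s) (tright1 t)) (tmul3 (tleft1 s') (tright1 t')).
Proof.
move=> ss' tt'; apply: teq3I => U C tC; have [_ [C2 C1]] := tC.
rewrite !eval3_tleft_tright (teq2E ss'); last first.
  apply: bilinear2_of_linear => [u|v]; apply: linear_fun_sum => p c x y.
    by rewrite mulrDl -scalerAl C2.
  by rewrite C1.
rewrite eval2_exchange [RHS]eval2_exchange (teq2E tt') //.
apply: bilinear2_sum => x; apply: (bilinear2_comp (B := C x.1)).
- exact: trilinear3_bil23.
- exact: linear_fun_mull.
- by [].
Qed.

Lemma tright_tleft_congr s s' t t' : teq2 s s' -> teq2 t t' ->
  teq3 (tmul3 (tright1 s) (tleft1 t)) (tmul3 (tright1 s') (tleft1 t')).
Proof.
move=> ss' tt'; apply: teq3I => U C tC; have [C3 [C2 _]] := tC.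
rewrite !eval3_tright_tleft (teq2E ss'); last first.
  apply: bilinear2_of_linear => [u|v]; apply: linear_fun_sum => p c x y.
    by rewrite C3.
  by rewrite mulrDl -scalerAl C2.
rewrite eval2_exchange [RHS]eval2_exchange (teq2E tt') //.
apply: bilinear2_sum => x; apply: (bilinear2_comp (B := fun y z => C y z x.2)).
- exact: trilinear3_bil12.
- by [].
- exact: linear_fun_mull.
Qed.

Section Coproduct.
Variable D : A -> tens2 A.

Section CoproductEvaluation.
Variable U : lmodType k.
Implicit Types (B : A -> A -> U) (C : A -> A -> A -> U).

Lemma eval3_DeltaId C s :
  eval3 C (DeltaId D s) = eval2 (fun u v => eval2 (fun x y => C x y v) (D u)) s.
Proof.
rewrite /eval3 big_flatten big_map; apply: eq_bigr => p _; exact: big_map.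
Qed.

Lemma eval3_IdDelta C s :
  eval3 C (IdDelta D s) = eval2 (fun u v => eval2 (fun x y => C u x y) (D v)) s.
Proof.
rewrite /eval3 big_flatten big_map; apply: eq_bigr => p _; exact: big_map.
Qed.

Lemma eval2_T1 B s :
  eval2 B (T1 D s) = eval2 (fun u v => eval2 (fun x y => B x (y * v)) (D u)) s.
Proof.
rewrite /eval2 big_flatten big_map; apply: eq_bigr => p _.
by rewrite big_allpairs_dep; apply: eq_bigr => x _; rewrite big_seq1 mulr1.
Qed.

Lemma eval2_T2 B s :
  eval2 B (T2 D s) = eval2 (fun u v => eval2 (fun x y => B (u * x) y) (D v)) s.
Proof.
rewrite /eval2 big_flatten big_map; apply: eq_bigr => p _.
by rewrite big_allpairs_dep big_seq1; apply: eq_bigr => x _; rewrite mul1r.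
Qed.

Lemma eval3_idT1 C (t : tens3 A) :
  eval3 C (idT1 D t) = eval3 (fun u v w => eval2 (fun x y => C u x (y * w)) (D v)) t.
Proof.
rewrite /eval3 big_flatten big_map; apply: eq_bigr => p _.
by rewrite big_map -[LHS]/(eval2 (C p.1.1) (T1 D _)) eval2_T1 eval2_pure.
Qed.

Lemma eval3_T2id C (t : tens3 A) :
  eval3 C (T2id D t) = eval3 (fun u v w => eval2 (fun x y => C (u * x) y w) (D v)) t.
Proof.
rewrite /eval3 big_flatten big_map; apply: eq_bigr => p _.
by rewrite big_map -[LHS]/(eval2 (fun x y => C x y p.2) (T2 D _)) eval2_T2 eval2_pure.
Qed.

End CoproductEvaluation.

Hypothesis linD : linear_tens D.

Lemma linear_fun_evalD (U : lmodType k) (B : A -> A -> U) :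
  bilinear2 B -> linear_fun (fun a => eval2 B (D a)).
Proof. by move=> bB c x y; rewrite (teq2E (linD c x y) bB) eval2_cat eval2_tscale. Qed.

Lemma DeltaId_congr s s' : teq2 s s' -> teq3 (DeltaId D s) (DeltaId D s').
Proof.
move=> ss'; apply: teq3I => U C tC; rewrite !eval3_DeltaId (teq2E ss') //.
apply: bilinear2_of_linear => [u|v].
  by apply: linear_fun_sum => p; apply: trilinear3_lin3.
by apply: linear_fun_evalD; apply: trilinear3_bil12.
Qed.

Lemma IdDelta_congr s s' : teq2 s s' -> teq3 (IdDelta D s) (IdDelta D s').
Proof.
move=> ss'; apply: teq3I => U C tC; rewrite !eval3_IdDelta (teq2E ss') //.
apply: bilinear2_of_linear => [u|v].
  by apply: linear_fun_evalD; apply: trilinear3_bil23.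
by apply: linear_fun_sum => p; case: tC => _ [_ C1] c x y; rewrite C1.
Qed.

End Coproduct.
End TensorCalculus.

Arguments linear_fun_id {k A}.

Section Counit.
Variables (k : fieldType) (A : algType k) (e : A -> k).
Hypothesis le : linear_scal e.
Implicit Types (s : tens2 A) (a b c : A).

Lemma epsIdE s : epsId e s = eval2 (fun x y => e x *: y) s.
Proof. by []. Qed.

Lemma idEpsE s : idEps e s = eval2 (fun x y => e y *: x) s.
Proof. by []. Qed.

Lemma linear_scal0 : e 0 = 0.
Proof.
have := le 1 0 0; rewrite scaler0 addr0 mul1r => e00.
by apply: (addrI (e 0)); rewrite addr0 -e00.
Qed.

Lemma linear_scalZ (c : k) x : e (c *: x) = c * e x.
Proof. by have := le c x 0; rewrite !addr0 linear_scal0 addr0. Qed.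

Lemma linear_scal_sum X (r : seq X) (F : X -> A) :
  e (\sum_(i <- r) F i) = \sum_(i <- r) e (F i).
Proof.
have eD x y : e (x + y) = e x + e y by have := le 1 x y; rewrite scale1r mul1r.
elim: r => [|x r IH]; first by rewrite !big_nil linear_scal0.
by rewrite !big_cons eD IH.
Qed.

Lemma linear_scal_eval2 (g : A -> A -> k) (f : A -> A -> A) s :
  e (eval2 (fun x y => g x y *: f x y) s) = \sum_(p <- s) g p.1 p.2 * e (f p.1 p.2).
Proof. by rewrite linear_scal_sum; apply: eq_bigr => p _; rewrite linear_scalZ. Qed.

Lemma linear_scal_mull a : linear_scal (fun u => e (a * u)).
Proof. by move=> c x y; rewrite mulrDr -scalerAr le. Qed.

Lemma linear_scal_mulr a : linear_scal (fun u => e (u * a)).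
Proof. by move=> c x y; rewrite mulrDl -scalerAl le. Qed.

End Counit.

Section CounitAxioms.
Variables (k : fieldType) (A : algType k) (E : tens2 A) (D : A -> tens2 A) (e : A -> k).
Implicit Types (s : tens2 A) (a b c : A).

Lemma epsEps_mul3 a b c s :
  epsEps e (tmul2 (tmul2 (tpure2 a b) s) (tpure2 1 c)) =
  \sum_(p <- s) e (a * p.1) * e (b * p.2 * c).
Proof.
rewrite /epsEps /tmul2 !big_allpairs_dep big_seq1.
by apply: eq_bigr => p _; rewrite big_seq1 mulr1.
Qed.

Lemma epsId_E_Delta_l :
  (forall a b c, epsId e (tmul2 (tmul2 (tpure2 a b) E) (tpure2 1 c)) =
                 epsId e (tmul2 (tpure2 a b) (D c))) <->
  (forall a c, eval2 (fun x y => e (a * x) *: (y * c)) E =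
               eval2 (fun x y => e (a * x) *: y) (D c)).
Proof.
have epsIdEl a b c s : epsId e (tmul2 (tmul2 (tpure2 a b) s) (tpure2 1 c)) =
    b * eval2 (fun x y => e (a * x) *: (y * c)) s.
  rewrite epsIdE eval2_mulpure eval2_puremul /eval2 mulr_sumr.
  by apply: eq_bigr => p _; rewrite mulr1 -mulrA scalerAr.
have epsIdDl a b c : epsId e (tmul2 (tpure2 a b) (D c)) =
    b * eval2 (fun x y => e (a * x) *: y) (D c).
  by rewrite epsIdE eval2_puremul /eval2 mulr_sumr; apply: eq_bigr => p _; rewrite scalerAr.
split=> [epsE a c | epsE a b c]; last by rewrite epsIdEl epsIdDl epsE.
by have := epsE a 1 c; rewrite epsIdEl epsIdDl !mul1r.
Qed.

Lemma epsId_E_Delta_r :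
  (forall a b c, epsId e (tmul2 (tmul2 (tpure2 1 a) E) (tpure2 b c)) =
                 epsId e (tmul2 (D a) (tpure2 b c))) <->
  (forall a b, eval2 (fun x y => e (x * b) *: (a * y)) E =
               eval2 (fun x y => e (x * b) *: y) (D a)).
Proof.
have epsIdEl a b c s : epsId e (tmul2 (tmul2 (tpure2 1 a) s) (tpure2 b c)) =
    eval2 (fun x y => e (x * b) *: (a * y)) s * c.
  rewrite epsIdE eval2_mulpure eval2_puremul /eval2 mulr_suml.
  by apply: eq_bigr => p _; rewrite mul1r scalerAl.
have epsIdDl a b c : epsId e (tmul2 (D a) (tpure2 b c)) =
    eval2 (fun x y => e (x * b) *: y) (D a) * c.
  by rewrite epsIdE eval2_mulpure /eval2 mulr_suml; apply: eq_bigr => p _; rewrite scalerAl.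
split=> [epsE a b | epsE a b c]; last by rewrite epsIdEl epsIdDl epsE.
by have := epsE a b 1; rewrite epsIdEl epsIdDl !mulr1.
Qed.

Hypothesis le : linear_scal e.

Section Left.
Hypothesis epsE : forall a c,
  eval2 (fun x y => e (a * x) *: (y * c)) E = eval2 (fun x y => e (a * x) *: y) (D c).

Lemma contract_E_l (counitr : forall a, idEps e (D a) = a) a c :
  \sum_(w <- E) e (a * w.1) * e (w.2 * c) = e (a * c).
Proof.
have := congr1 e (epsE a c); rewrite !linear_scal_eval2 // => ->.
rewrite -{2}(counitr c) idEpsE /eval2 mulr_sumr linear_scal_sum //.
by apply: eq_bigr => p _; rewrite -scalerAr linear_scalZ // mulrC.
Qed.

Lemma counit1_of_E
    (contract : forall a c, \sum_(w <- E) e (a * w.1) * e (w.2 * c) = e (a * c)) a b c :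
  e (a * b * c) = epsEps e (tmul2 (tmul2 (tpure2 a 1) (D b)) (tpure2 1 c)).
Proof.
have := congr1 (fun u => e (u * c)) (epsE a b).
rewrite /= (linear_scal_eval2 (linear_scal_mulr le c) (fun x _ => e (a * x)) (fun _ y => y * b)).
rewrite (linear_scal_eval2 (linear_scal_mulr le c) (fun x _ => e (a * x)) (fun _ y => y)).
rewrite epsEps_mul3 /=.
move=> eqEDb; rewrite -mulrA -contract.
transitivity (\sum_(p <- D b) e (a * p.1) * e (p.2 * c)).
  by rewrite -eqEDb; apply: eq_bigr => p _; rewrite mulrA.
by apply: eq_bigr => p _; rewrite mul1r.
Qed.

End Left.

Section Right.
Hypothesis epsE : forall a b,
  eval2 (fun x y => e (x * b) *: (a * y)) E = eval2 (fun x y => e (x * b) *: y) (D a).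

Lemma contract_E_r (counitr : forall a, idEps e (D a) = a) a c :
  \sum_(w <- E) e (w.1 * c) * e (a * w.2) = e (a * c).
Proof.
have := congr1 e (epsE a c); rewrite !linear_scal_eval2 // => ->.
rewrite -{2}(counitr a) idEpsE /eval2 mulr_suml linear_scal_sum //.
by apply: eq_bigr => p _; rewrite -scalerAl linear_scalZ // mulrC.
Qed.

Lemma counit2_of_E
    (contract : forall a c, \sum_(w <- E) e (w.1 * c) * e (a * w.2) = e (a * c)) a b c :
  e (a * b * c) = epsEps e (tmul2 (tmul2 (tpure2 a 1) (ttw (D b))) (tpure2 1 c)).
Proof.
have := congr1 (fun u => e (a * u)) (epsE b c).
rewrite /= (linear_scal_eval2 (linear_scal_mull le a) (fun x _ => e (x * c)) (fun _ y => b * y)).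
rewrite (linear_scal_eval2 (linear_scal_mull le a) (fun x _ => e (x * c)) (fun _ y => y)).
rewrite epsEps_mul3 /ttw big_map /=.
move=> eqEDb; rewrite -contract.
transitivity (\sum_(p <- D b) e (p.1 * c) * e (a * p.2)).
  by rewrite -eqEDb; apply: eq_bigr => p _; rewrite mulrA.
by apply: eq_bigr => p _; rewrite mul1r mulrC.
Qed.

End Right.
End CounitAxioms.

Section Spans.
Variables (k : fieldType) (A : algType k) (X : Type) (g : X -> tens2 A).
Implicit Types (s t : tens2 A).

Lemma inspan2_gen t x : teq2 t (g x) -> inspan2 g t.
Proof.
move=> tg; exists [:: (1, x)]; apply: teq2_trans tg _; apply: teq2I => U B bB.
by rewrite eval2_span // big_seq1 scale1r.
Qed.

Lemma inspan2_mull s t : inspan2 g t ->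
  (forall x, teq2 (tmul2 s (g x)) (g x)) -> teq2 (tmul2 s t) t.
Proof.
move=> [l tl] sg; apply: teq2_trans (tmul2_congrr _ tl) _.
apply: teq2_trans (teq2_sym tl); apply: teq2I => U B bB.
rewrite eval2_tmul2_l eval2_span; last exact: bilinear2_eval_mulr.
by rewrite eval2_span //; apply: eq_bigr => q _; rewrite -eval2_tmul2_l (teq2E (sg q.2)).
Qed.

Lemma inspan2_mulr s t : inspan2 g t ->
  (forall x, teq2 (tmul2 (g x) s) (g x)) -> teq2 (tmul2 t s) t.
Proof.
move=> [l tl] gs; apply: teq2_trans (tmul2_congrl _ tl) _.
apply: teq2_trans (teq2_sym tl); apply: teq2I => U B bB.
rewrite eval2_tmul2_r eval2_span; last exact: bilinear2_eval_mull.
by rewrite eval2_span //; apply: eq_bigr => q _; rewrite -eval2_tmul2_r (teq2E (gs q.2)).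
Qed.

Lemma inspan2_teq t t' : teq2 t t' -> inspan2 g t' -> inspan2 g t.
Proof. by move=> tt' [l t'l]; exists l; apply: teq2_trans tt' t'l. Qed.

Lemma inspan2_lincomb (c : k) t1 t2 :
  inspan2 g t1 -> inspan2 g t2 -> inspan2 g (tscale2 c t1 ++ t2).
Proof.
move=> [l1 t1l] [l2 t2l]; exists ([seq (c * q.1, q.2) | q <- l1] ++ l2).
apply: teq2I => U B bB; rewrite eval2_cat eval2_tscale // (teq2E t1l) // (teq2E t2l) //.
rewrite !eval2_span // big_cat big_map scaler_sumr; congr (_ + _).
by apply: eq_bigr => q _; rewrite scalerA.
Qed.

End Spans.

Lemma inspan2_sub (k : fieldType) (A : algType k) X Y (g : X -> tens2 A) (h : Y -> tens2 A) :
  (forall x, inspan2 h (g x)) -> forall t, inspan2 g t -> inspan2 h t.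
Proof.
move=> gh t [l tl]; apply: inspan2_teq tl _.
elim: l => [|q l IH]; first by exists [::].
exact: inspan2_lincomb.
Qed.

Lemma inspan2_tmul2_l (k : fieldType) (A : algType k) (s t : tens2 A) :
  inspan2 (fun x : A * A => tmul2 s (tpure2 x.1 x.2)) (tmul2 s t).
Proof.
exists [seq (1, p) | p <- t]; apply: teq2I => U B bB.
rewrite (eval2_span (fun x : A * A => tmul2 s (tpure2 x.1 x.2))) // big_map.
rewrite eval2_tmul2_l; apply: eq_bigr => p _.
by rewrite scale1r eval2_mulpure.
Qed.

Lemma inspan2_tmul2_r (k : fieldType) (A : algType k) (s t : tens2 A) :
  inspan2 (fun x : A * A => tmul2 (tpure2 x.1 x.2) s) (tmul2 t s).
Proof.
exists [seq (1, p) | p <- t]; apply: teq2I => U B bB.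
rewrite (eval2_span (fun x : A * A => tmul2 (tpure2 x.1 x.2) s)) // big_map.
rewrite eval2_tmul2_r; apply: eq_bigr => p _.
by rewrite scale1r eval2_puremul.
Qed.

Section WeakMultiplierToWeak.
Variables (k : fieldType) (A : algType k) (E : tens2 A) (D : A -> tens2 A) (e : A -> k).
Hypothesis wmb : is_weak_multiplier_bialgebra E D e.
Implicit Types (a b c : A).

Lemma wmb_E_D1 : teq2 E (D 1).
Proof.
(* Delta(1) E = E since E lies in the span of the Delta(a)(b (x) b'), and
   Delta(1) E = Delta(1) since Delta(1) = Delta(1)(1 (x) 1) lies in the span of
   the (b (x) b') E. *)
have D1E : teq2 (tmul2 (D 1) E) E.
  apply: (inspan2_mull (g := fun x : A * A * A => tmul2 (D x.1.1) (tpure2 x.1.2 x.2))).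
    by apply/(wm_span_l wmb)/(inspan2_gen (x := (1, 1))); apply/teq2_sym/tmul2_11r.
  move=> [[a b] b'] /=; apply: teq2_trans (teq2_sym (tmul2A _ _ _)) _.
  apply/tmul2_congrl/teq2_sym.
  by have := wm_Dmult wmb 1 a; rewrite mul1r.
have D1E' : teq2 (tmul2 (D 1) E) (D 1).
  apply: (inspan2_mulr (g := fun x : A * A => tmul2 (tpure2 x.1 x.2) E)).
    by apply/(wm_span_r wmb)/(inspan2_gen (x := (1, 1, 1))); apply/teq2_sym/tmul2_11l.
  move=> [b b'] /=; apply: teq2_trans (tmul2A _ _ _) _.
  exact/tmul2_congrr/(wm_Eidem wmb).
exact: teq2_trans (teq2_sym D1E) D1E'.
Qed.

Lemma wmb_counitl a : epsId e (D a) = a.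
Proof.
have := wm_counitl wmb (tpure2 a 1).
rewrite epsIdE eval2_T1 eval2_pure /tmu big_seq1 /= mulr1 => {2}<-.
by rewrite epsIdE; apply: eq_eval2 => x y; rewrite mulr1.
Qed.

Lemma wmb_counitr a : idEps e (D a) = a.
Proof.
have := wm_counitr wmb (tpure2 1 a).
rewrite idEpsE eval2_T2 eval2_pure /tmu big_seq1 /= mul1r => {2}<-.
by rewrite idEpsE; apply: eq_eval2 => x y; rewrite mul1r.
Qed.

Lemma wmb_coassoc a : teq3 (DeltaId D (D a)) (IdDelta D (D a)).
Proof.
(* condition (ii) at 1 (x) a (x) 1 *)
apply: teq3I => U C tC; have := teq3E (wm_T wmb [:: (1, a, 1)]) tC.
rewrite eval3_T2id eval3_idT1 eval3_seq1 /= eval3_idT1 eval3_T2id eval3_seq1 /=.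
rewrite eval3_DeltaId eval3_IdDelta => h; apply: etrans (etrans _ h) _.
  by apply: eq_eval2 => x y; apply: eq_eval2 => z w; rewrite mul1r mulr1.
by apply: eq_eval2 => x y; apply: eq_eval2 => z w; rewrite mul1r mulr1.
Qed.

Lemma wmb_unit1 : teq3 (DeltaId D (D 1)) (tmul3 (tleft1 (D 1)) (tright1 (D 1))).
Proof.
apply: teq3_trans (DeltaId_congr (wm_Dlin wmb) (teq2_sym wmb_E_D1)) _.
apply: teq3_trans (teq3_sym (wm_E3 wmb)) _.
apply: teq3_trans (teq3_sym (wm_E3l wmb)) _.
exact: tleft_tright_congr wmb_E_D1 wmb_E_D1.
Qed.

Lemma wmb_unit2 : teq3 (DeltaId D (D 1)) (tmul3 (tright1 (D 1)) (tleft1 (D 1))).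
Proof.
apply: teq3_trans (DeltaId_congr (wm_Dlin wmb) (teq2_sym wmb_E_D1)) _.
apply: teq3_trans (teq3_sym (wm_E3 wmb)) _.
apply: teq3_trans (teq3_sym (wm_E3r wmb)) _.
exact: tright_tleft_congr wmb_E_D1 wmb_E_D1.
Qed.

Let le := wm_elin wmb.
Let epsE_l := proj1 (epsId_E_Delta_l E D e) (wm_eps2 wmb).
Let epsE_r := proj1 (epsId_E_Delta_r E D e) (wm_eps1 wmb).

Lemma wmb_counit1 a b c :
  e (a * b * c) = epsEps e (tmul2 (tmul2 (tpure2 a 1) (D b)) (tpure2 1 c)).
Proof. exact/(counit1_of_E le epsE_l)/(contract_E_l le epsE_l)/wmb_counitr. Qed.

Lemma wmb_counit2 a b c :
  e (a * b * c) = epsEps e (tmul2 (tmul2 (tpure2 a 1) (ttw (D b))) (tpure2 1 c)).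
Proof. exact/(counit2_of_E le epsE_r)/(contract_E_r le epsE_r)/wmb_counitr. Qed.

Lemma wmb_weak_bialgebra : is_weak_bialgebra D e.
Proof.
split.
- exact: wm_Dlin wmb.
- exact: le.
- exact: wmb_coassoc.
- exact: wmb_counitl.
- exact: wmb_counitr.
- exact: wm_Dmult wmb.
- exact: wmb_unit1.
- exact: wmb_unit2.
- exact: wmb_counit1.
- exact: wmb_counit2.
Qed.

End WeakMultiplierToWeak.

Section WeakToWeakMultiplier.
Variables (k : fieldType) (A : algType k) (D : A -> tens2 A) (e : A -> k).
Hypothesis wb : is_weak_bialgebra D e.
Implicit Types (a b c : A).

Let le := wb_elin wb.
Let beps : bilinear2 (fun x y : A => e x *: y) := bilinear2_scal le.

Lemma wb_contract_l a c : \sum_(w <- D 1) e (a * w.1) * e (w.2 * c) = e (a * c).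
Proof.
rewrite -[in RHS](mulr1 a) (wb_counit1 wb a 1 c) epsEps_mul3.
by apply: eq_bigr => w _; rewrite mul1r.
Qed.

Lemma wb_contract_r a c : \sum_(w <- D 1) e (w.1 * c) * e (a * w.2) = e (a * c).
Proof.
rewrite -[in RHS](mulr1 a) (wb_counit2 wb a 1 c) epsEps_mul3 /ttw big_map.
by apply: eq_bigr => w _; rewrite /= mul1r mulrC.
Qed.

Lemma wb_epsId_mul a b : eval2 (fun x y => e x *: y) (tmul2 (D a) (D b)) = a * b.
Proof. by rewrite -(teq2E (wb_mult wb a b) beps); apply: (wb_counitl wb). Qed.

Lemma wb_epsD1_l a c :
  eval2 (fun x y => e (a * x) *: (y * c)) (D 1) = eval2 (fun x y => e (a * x) *: y) (D c).
Proof.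
(* C on (id (x) Delta) Delta(1) gives the left side; on the equal tensor
   (Delta(1) (x) 1)(1 (x) Delta(1)) the contraction over the first Delta(1)
   leaves the right side. *)
pose C u v w := e (a * u) *: eval2 (fun x y => e (v * x) *: (w * y)) (D c).
have bvw := bilinear2_eval_mull (D c) beps.
have tC : trilinear3 C.
  apply: trilinear3_of_linear => [u v|u w|v w].
  - exact: linear_funZ (bilinear2_linr v bvw).
  - exact: linear_funZ (bilinear2_linl w bvw).
  - by apply: linear_fun_scal; apply: linear_scal_mull.
have IdDelta_D1 : eval3 C (IdDelta D (D 1)) = eval2 (fun x y => e (a * x) *: (y * c)) (D 1).
  rewrite eval3_IdDelta; apply: eq_eval2 => u v.
  rewrite /eval2 -scaler_sumr; congr (_ *: _).
  by rewrite -wb_epsId_mul eval2_tmul2_r.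
have contract_D1 p q : eval2 (fun u v => C u (v * p) q) (D 1) =
    eval2 (fun x y => e (a * (p * x)) *: (q * y)) (D c).
  rewrite /C /eval2; under eq_bigr do rewrite scaler_sumr.
  rewrite exchange_big; apply: eq_bigr => r _.
  under eq_bigr do rewrite scalerA -mulrA.
  by rewrite -scaler_suml wb_contract_l.
have beaD : bilinear2 (fun x y => e (a * x) *: y).
  exact: (bilinear2_comp beps (linear_fun_mull a) linear_fun_id).
rewrite -IdDelta_D1 -(teq3E (wb_coassoc wb 1) tC) (teq3E (wb_unit1 wb) tC).
rewrite eval3_tleft_tright eval2_exchange (eq_eval2 _ contract_D1).
have := teq2E (wb_mult wb 1 c) beaD; rewrite mul1r => ->; rewrite eval2_tmul2_r.
by apply: eq_eval2 => p q; apply: eq_eval2 => x y; rewrite mulrA.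
Qed.

Lemma wb_epsD1_r a b :
  eval2 (fun x y => e (x * b) *: (a * y)) (D 1) = eval2 (fun x y => e (x * b) *: y) (D a).
Proof.
pose C u v w := e (u * b) *: eval2 (fun x y => e (x * v) *: (y * w)) (D a).
have bvw := bilinear2_eval_mulr (D a) beps.
have tC : trilinear3 C.
  apply: trilinear3_of_linear => [u v|u w|v w].
  - exact: linear_funZ (bilinear2_linr v bvw).
  - exact: linear_funZ (bilinear2_linl w bvw).
  - by apply: linear_fun_scal; apply: linear_scal_mulr.
have IdDelta_D1 : eval3 C (IdDelta D (D 1)) = eval2 (fun x y => e (x * b) *: (a * y)) (D 1).
  rewrite eval3_IdDelta; apply: eq_eval2 => u v.
  rewrite /eval2 -scaler_sumr; congr (_ *: _).
  by rewrite -wb_epsId_mul eval2_tmul2_l.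
have contract_D1 u v : eval2 (fun p q => C p (u * q) v) (D 1) =
    eval2 (fun x y => e (x * u * b) *: (y * v)) (D a).
  rewrite /C /eval2; under eq_bigr do rewrite scaler_sumr.
  rewrite exchange_big; apply: eq_bigr => r _.
  under eq_bigr do rewrite scalerA mulrA.
  by rewrite -scaler_suml wb_contract_r.
have beDb : bilinear2 (fun x y => e (x * b) *: y).
  exact: (bilinear2_comp beps (linear_fun_mulr b) linear_fun_id).
rewrite -IdDelta_D1 -(teq3E (wb_coassoc wb 1) tC) (teq3E (wb_unit2 wb) tC).
rewrite eval3_tright_tleft (eq_eval2 _ contract_D1).
have := teq2E (wb_mult wb a 1) beDb; rewrite mulr1 => ->; by rewrite eval2_tmul2_l.
Qed.

Lemma wb_T (t : tens3 A) : teq3 (T2id D (idT1 D t)) (idT1 D (T2id D t)).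
Proof.
apply: teq3I => U C tC; rewrite eval3_T2id !eval3_idT1 eval3_T2id.
apply: eq_eval3 => u v w.
have tC' : trilinear3 (fun x y z => C (u * x) y (z * w)).
  exact: trilinear3_comp tC (linear_fun_mull u) linear_fun_id (linear_fun_mulr w).
by have := teq3E (wb_coassoc wb v) tC'; rewrite eval3_DeltaId eval3_IdDelta.
Qed.

Lemma wb_counitl_T1 s : epsId e (T1 D s) = tmu s.
Proof.
rewrite epsIdE eval2_T1; apply: eq_bigr => p _.
rewrite -{2}(wb_counitl wb p.1) epsIdE /eval2 mulr_suml.
by apply: eq_bigr => x _; rewrite scalerAl.
Qed.

Lemma wb_counitr_T2 s : idEps e (T2 D s) = tmu s.
Proof.
rewrite idEpsE eval2_T2; apply: eq_bigr => p _.
rewrite -{2}(wb_counitr wb p.2) idEpsE /eval2 mulr_sumr.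
by apply: eq_bigr => x _; rewrite scalerAr.
Qed.

Variable E : tens2 A.
Hypothesis E_D1 : teq2 E (D 1).

Lemma wb_E_idem : teq2 (tmul2 E E) E.
Proof.
apply: teq2_trans (tmul2_congr E_D1 E_D1) _.
have := wb_mult wb 1 1; rewrite mulr1 => D11.
exact: teq2_trans (teq2_sym D11) (teq2_sym E_D1).
Qed.

Lemma wb_E_mull a : teq2 (tmul2 E (D a)) (D a).
Proof.
apply: teq2_trans (tmul2_congrl _ E_D1) _.
by have := wb_mult wb 1 a; rewrite mul1r; apply: teq2_sym.
Qed.

Lemma wb_E_mulr a : teq2 (tmul2 (D a) E) (D a).
Proof.
apply: teq2_trans (tmul2_congrr _ E_D1) _.
by have := wb_mult wb a 1; rewrite mulr1; apply: teq2_sym.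
Qed.

Lemma wb_span_l t :
  inspan2 (fun x : A * A * A => tmul2 (D x.1.1) (tpure2 x.1.2 x.2)) t <->
  inspan2 (fun x : A * A => tmul2 E (tpure2 x.1 x.2)) t.
Proof.
split; apply: inspan2_sub; first move=> [[a b] b'] /=.
  apply: (inspan2_teq _ (inspan2_tmul2_l E (tmul2 (D a) (tpure2 b b')))).
  apply: teq2_trans (tmul2A _ _ _); apply: tmul2_congrl.
  exact/teq2_sym/wb_E_mull.
move=> [b b'] /=; apply: (inspan2_gen (x := (1, b, b'))).
exact: tmul2_congrl _ E_D1.
Qed.

Lemma wb_span_r t :
  inspan2 (fun x : A * A * A => tmul2 (tpure2 x.1.2 x.2) (D x.1.1)) t <->
  inspan2 (fun x : A * A => tmul2 (tpure2 x.1 x.2) E) t.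
Proof.
split; apply: inspan2_sub; first move=> [[a b] b'] /=.
  apply: (inspan2_teq _ (inspan2_tmul2_r E (tmul2 (tpure2 b b') (D a)))).
  apply: teq2_trans (teq2_sym (tmul2A _ _ _)); apply: tmul2_congrr.
  exact/teq2_sym/wb_E_mulr.
move=> [b b'] /=; apply: (inspan2_gen (x := (1, b, b'))).
exact: tmul2_congrr _ E_D1.
Qed.

Lemma wb_E3 : teq3 (IdDelta D E) (DeltaId D E).
Proof.
apply: teq3_trans (IdDelta_congr (wb_Dlin wb) E_D1) _.
apply: teq3_trans (teq3_sym (wb_coassoc wb 1)) _.
exact: (DeltaId_congr (wb_Dlin wb) (teq2_sym E_D1)).
Qed.

Lemma wb_E3l : teq3 (tmul3 (tleft1 E) (tright1 E)) (IdDelta D E).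
Proof.
apply: teq3_trans (tleft_tright_congr E_D1 E_D1) _.
apply: teq3_trans (teq3_sym (wb_unit1 wb)) _.
apply: teq3_trans (wb_coassoc wb 1) _.
exact: (IdDelta_congr (wb_Dlin wb) (teq2_sym E_D1)).
Qed.

Lemma wb_E3r : teq3 (tmul3 (tright1 E) (tleft1 E)) (IdDelta D E).
Proof.
apply: teq3_trans (tright_tleft_congr E_D1 E_D1) _.
apply: teq3_trans (teq3_sym (wb_unit2 wb)) _.
apply: teq3_trans (wb_coassoc wb 1) _.
exact: (IdDelta_congr (wb_Dlin wb) (teq2_sym E_D1)).
Qed.

Lemma wb_eps1 a b c :
  epsId e (tmul2 (tmul2 (tpure2 1 a) E) (tpure2 b c)) = epsId e (tmul2 (D a) (tpure2 b c)).
Proof.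
move: a b c; apply/(epsId_E_Delta_r E D e) => a b; rewrite -wb_epsD1_r.
exact: (teq2E E_D1 (bilinear2_comp beps (linear_fun_mulr b) (linear_fun_mull a))).
Qed.

Lemma wb_eps2 a b c :
  epsId e (tmul2 (tmul2 (tpure2 a b) E) (tpure2 1 c)) = epsId e (tmul2 (tpure2 a b) (D c)).
Proof.
move: a b c; apply/(epsId_E_Delta_l E D e) => a c; rewrite -wb_epsD1_l.
exact: (teq2E E_D1 (bilinear2_comp beps (linear_fun_mull a) (linear_fun_mulr c))).
Qed.

Lemma wb_weak_multiplier_bialgebra : is_weak_multiplier_bialgebra E D e.
Proof.
split.
- by move=> a; exists (tpure2 a 1); rewrite /tmu big_seq1 mulr1.
- by move=> b ab0; rewrite -(mul1r b) ab0.
- by move=> b ba0; rewrite -(mulr1 b) ba0.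
- exact: wb_E_idem.
- exact: wb_Dlin wb.
- exact: wb_mult wb.
- exact: le.
- exact: wb_T.
- exact: wb_counitl_T1.
- exact: wb_counitr_T2.
- exact: wb_span_l.
- exact: wb_span_r.
- exact: wb_E3.
- exact: wb_E3l.
- exact: wb_E3r.
- exact: wb_eps1.
- exact: wb_eps2.
Qed.

End WeakToWeakMultiplier.

Theorem theorem2p10 (k : fieldType) (A : algType k)
    (E : tens2 A) (D : A -> tens2 A) (e : A -> k) :
  is_weak_multiplier_bialgebra E D e <->
  (is_weak_bialgebra D e /\ teq2 E (D 1)).
Proof.
split=> [wmb | [wb E_D1]]; last exact: wb_weak_multiplier_bialgebra.
by split; [apply: wmb_weak_bialgebra wmb | apply: wmb_E_D1 wmb].
Qed.
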